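(* Let $G$ be a $k$-degenerate graph with maximum degree $\Delta(G)>1$ and let $H$ be an $l$-degenerate graph. Then $G+_Q H$ is $\max\{2\Delta(G)-2,\,k+l\}$-degenerate.
   Context: A graph is $k$-degenerate if its vertices can be successively deleted so that each deleted vertex has degree at most $k$ at the time of deletion. The line superposition graph $Q(G)$ has vertex set $V(G)\cup E(G)$: it is the subdivision graph $S(G)$ (each edge $e=xy$ of $G$ replaced by the path $x\,e\,y$) together with edges $ee'$ between new vertices $e,e'$ whenever the edges $e,e'$ are adjacent in $G$. The $Q$-sum $G+_Q H$ has vertex set $(V(G)\cup E(G))\times V(H)$, and $(u_1,u_2)\sim(v_1,v_2)$ iff [$u_1=v_1\in V(G)$ and $u_2v_2\in E(H)$] or [$u_2=v_2$ and $u_1v_1\in E(Q(G))$]. *)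

From mathcomp Require Import all_boot all_order.
Set Implicit Arguments. Unset Strict Implicit. Unset Printing Implicit Defensive.

Section Graphs.
Variable V : finType.

Definition simple_graph (e : rel V) : Prop := symmetric e /\ irreflexive e.

Fixpoint deletion_ok (e : rel V) (k : nat) (s : seq V) : bool :=
  if s is x :: s' then (count (e x) s' <= k) && deletion_ok e k s' else true.

(* k-degenerate: the vertices can be successively deleted (in the order s,
   which lists every vertex exactly once), each having degree <= k at the
   time of deletion *)
Definition degenerate (e : rel V) (k : nat) : Prop :=
  exists s : seq V, perm_eq s (enum V) /\ deletion_ok e k s.

Definition deg (e : rel V) (v : V) : nat := #|[set u | e v u]|.

Definition max_deg (e : rel V) : nat := \max_(v : V) deg e v.

Definition is_edge (e : rel V) (A : {set V}) : bool :=
  [exists x, exists y, e x y && (A == [set x; y])].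

Definition Edge (e : rel V) := {A : {set V} | is_edge e A}.

Definition QV (e : rel V) := (V + Edge e)%type.

(* adjacency in the line superposition graph Q(G):
   subdivision edges x -- e when x is an endpoint of e,
   and e -- e' when e, e' are distinct adjacent edges of G *)
Definition Qadj (e : rel V) (a b : QV e) : bool :=
  match a, b with
  | inl x, inr f => x \in val f
  | inr f, inl x => x \in val f
  | inr f, inr f' => (f != f') && (val f :&: val f' != set0)
  | inl _, inl _ => false
  end.

Definition is_vert (e : rel V) (a : QV e) : bool :=
  if a is inl _ then true else false.
End Graphs.

Definition Qsum (T U : finType) (eG : rel T) (eH : rel U)
  : rel (QV eG * U)%type :=
  fun a b =>
    ((a.1 == b.1) && is_vert a.1 && eH a.2 b.2)
    || ((a.2 == b.2) && Qadj a.1 b.1).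
Arguments Qsum [T U] eG eH _ _.

(* A graph e is k-degenerate iff some rank r : V -> nat leaves every vertex
   at most k neighbours of rank >= its own (sort the vertices by rank).  Take
   such ranks g for G and h for H and rank Q-sum vertices lexicographically:
   a vertex copy (x, u) gets (2 g x, h u) and an edge copy (f, u), f = ab
   with g a <= g b, gets (2 g a + 1, 0).  A vertex copy (x, u) then sees
   forward only its H-neighbours of higher h-rank and the copies of edges
   from x to its G-forward neighbours: at most l + k.  An edge copy sees
   forward at most the vertex b (and only when g a < g b), the other
   forward edges at a (at most k - 1) and the other edges at b not through
   a (at most Delta - 1).  If k < Delta this is at most 2 Delta - 2; if
   k >= Delta, the same count with a constant g (and Delta for k) gives
   2 Delta - 2 and Delta + l <= k + l. *)

From mathcomp Require Import all_boot all_order zify.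

Set Implicit Arguments. Unset Strict Implicit. Unset Printing Implicit Defensive.
Import Order.TTheory.

Section Degeneracy.
Variable V : finType.
Implicit Types (e : rel V) (k : nat) (s : seq V).

Definition fwd (disp : Order.disp_t) (R : orderType disp) e (r : V -> R) x :=
  [set y | e x y & (r x <= r y)%O].

Lemma in_fwd (disp : Order.disp_t) (R : orderType disp) e (r : V -> R) x y :
  (y \in fwd e r x) = e x y && (r x <= r y)%O.
Proof. by rewrite inE. Qed.

Lemma deletion_okP e k s :
  reflect (forall s1 x s2, s = s1 ++ x :: s2 -> count (e x) s2 <= k)
          (deletion_ok e k s).
Proof.
elim: s => [|x s IH] /=; first by apply: ReflectT => -[|? ?] ? ?.
apply: (iffP andP) => [[le_x /IH ok_s] [|z s1] y s2 [eq_xy def_s] | ok].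
- by rewrite -def_s -eq_xy.
- exact: ok_s def_s.
split; first exact: (ok [::] x s).
by apply/IH => s1 y s2 def_s; apply: (ok (x :: s1)); rewrite def_s.
Qed.

Lemma degenerate_le e k k' : k <= k' -> degenerate e k -> degenerate e k'.
Proof.
move=> le_kk' [s [perm_s /deletion_okP ok_s]]; exists s; split => //.
by apply/deletion_okP => s1 x s2 /ok_s /leq_trans; apply.
Qed.

Lemma degenerate_of_rank (disp : Order.disp_t) (R : orderType disp) e k
    (r : V -> R) :
  (forall x, #|fwd e r x| <= k) -> degenerate e k.
Proof.
move=> fwd_k; pose le_r a b := (r a <= r b)%O.
have le_r_trans : transitive le_r by move=> ? ? ?; apply: le_trans.
exists (sort le_r (enum V)); split; first by rewrite perm_sort.
apply/deletion_okP => s1 x s2 def_s.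
have sorted_s : sorted le_r (s1 ++ x :: s2).
  by rewrite -def_s; apply: sort_sorted => a b; apply: le_total.
have uniq_s2 : uniq s2.
  by move: (sort_uniq le_r (enum V)); rewrite enum_uniq def_s cat_uniq /= => /and4P[].
have x_le_s2 : all (le_r x) s2.
  exact: order_path_min le_r_trans (cat_sorted2 sorted_s).2.
rewrite -size_filter -(card_uniqP (filter_uniq _ uniq_s2)).
apply: leq_trans (fwd_k x); apply/subset_leq_card/subsetP => y.
by rewrite mem_filter inE => /andP[-> /(allP x_le_s2)].
Qed.

Lemma rank_of_degenerate e k : irreflexive e -> degenerate e k ->
  exists r : V -> nat, forall x, #|fwd e r x| <= k.
Proof.
move=> irr_e [s [perm_s ok_s]]; exists (index^~ s) => x.
have mem_s y : y \in s by rewrite (perm_mem perm_s) mem_enum.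
have def_s : s = take (index x s) s ++ x :: drop (index x s).+1 s.
  by rewrite -drop_index ?cat_take_drop.
apply: leq_trans (deletion_okP _ _ _ ok_s _ _ _ def_s).
rewrite -size_filter; apply: leq_trans (card_size _).
apply/subset_leq_card/subsetP => y; rewrite inE mem_filter leEnat => /andP[exy le_xy].
rewrite exy /=.
have : y \in drop (index x s) s.
  by move: (mem_s y); rewrite -{1}(cat_take_drop (index x s) s) mem_cat =>
    /orP[/index_ltn|//]; rewrite ltnNge le_xy.
rewrite drop_index // inE => /orP[/eqP eq_yx|//].
by move: exy; rewrite eq_yx irr_e.
Qed.

End Degeneracy.

Lemma card_le_inj_in (A B : finType) (S : {set A}) (S' : {set B}) (f : A -> B) :
  {in S &, injective f} -> {in S, forall a, f a \in S'} -> #|S| <= #|S'|.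
Proof.
move=> inj_f f_S; rewrite -(card_in_imset inj_f); apply: subset_leq_card.
by apply/subsetP => _ /imsetP[a aS ->]; apply: f_S.
Qed.

Section QsumAdjacency.
Variables (T U : finType) (eG : rel T) (eH : rel U).
Implicit Types (x y : T) (f : Edge eG) (u v : U).

Lemma Qsum_vertex_vertex x y u v :
  Qsum eG eH (inl x, u) (inl y, v) = (x == y) && eH u v.
Proof. by rewrite /Qsum /= andbF orbF andbT. Qed.

Lemma Qsum_vertex_edge x f u v :
  Qsum eG eH (inl x, u) (inr f, v) = (u == v) && (x \in val f).
Proof. by []. Qed.

Lemma Qsum_edge_vertex f y u v :
  Qsum eG eH (inr f, u) (inl y, v) = (u == v) && (y \in val f).
Proof. by []. Qed.

Lemma Qsum_edge_edge f (f' : Edge eG) u v :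
  Qsum eG eH (inr f, u) (inr f', v) = [&& u == v, f != f' & val f :&: val f' != set0].
Proof. by rewrite /Qsum /= andbF. Qed.

End QsumAdjacency.

Section QsumRank.
Variables (T U : finType) (eG : rel T) (eH : rel U).
Hypothesis symG : symmetric eG.
Variables (g : T -> nat) (h : U -> nat) (m l d : nat).
Hypothesis fwd_g : forall x, #|fwd eG g x| <= m.
Hypothesis fwd_h : forall u, #|fwd eH h u| <= l.
Hypothesis deg_d : forall x, #|[set y | eG x y]| <= d.
Hypothesis m_le_d : m <= d.
Hypothesis g_rise_m_lt_d : forall x y, g x < g y -> m < d.
Implicit Types (x y : T) (f : Edge eG) (u v : U) (w : QV eG * U).

Lemma edge_orient (f : Edge eG) :
  exists p : T * T, [&& eG p.1 p.2, val f == [set p.1; p.2] & g p.1 <= g p.2].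
Proof.
case: f => _ /= /existsP[x /existsP[y /andP[exy /eqP ->]]].
case: (leqP (g x) (g y)) => [le_xy | /ltnW lt_yx].
- by exists (x, y); rewrite /= exy eqxx.
- by exists (y, x); rewrite /= symG exy setUC eqxx.
Qed.

Definition lo (f : Edge eG) : T := (xchoose (edge_orient f)).1.
Definition hi (f : Edge eG) : T := (xchoose (edge_orient f)).2.

Lemma edge_loP (f : Edge eG) :
  [/\ eG (lo f) (hi f), val f = [set lo f; hi f] & g (lo f) <= g (hi f)].
Proof.
have := xchooseP (edge_orient f); rewrite /lo /hi.
by move: (xchoose _) => p /and3P[e_p /eqP def_f le_p].
Qed.

Definition other (x : T) (f : Edge eG) : T := if lo f == x then hi f else lo f.

Lemma otherP x f : x \in val f -> eG x (other x f) /\ val f = [set x; other x f].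
Proof.
have [e_lh -> _] := edge_loP f; rewrite /other.
case: ifP => [/eqP <- _ | /eqP ne_lx]; first by split.
rewrite !inE => /orP[/eqP eq_xl | /eqP ->]; first by case: ne_lx.
by rewrite symG setUC.
Qed.

Lemma other_inj x : {in [pred f : Edge eG | x \in val f] &, injective (other x)}.
Proof.
move=> f f' /otherP[_ def_f] /otherP[_ def_f'] eq_other.
by apply: val_inj; rewrite def_f def_f' eq_other.
Qed.

Lemma lo_le_other x f : g (lo f) <= g (other x f).
Proof. by rewrite /other; case: eqP => // _; have [] := edge_loP f. Qed.

Definition key w : nat *l nat :=
  match w.1 with
  | inl x => ((g x).*2, h w.2)
  | inr f => ((g (lo f)).*2.+1, 0)
  end.

Lemma key_vertex_edge x f u v :
  (key (inl x, u) <= key (inr f, v))%O -> g x <= g (lo f).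
Proof. by rewrite lexi_pair !leEnat leq_Sdouble => /andP[]. Qed.

Lemma key_edge_vertex f y u v :
  (key (inr f, u) <= key (inl y, v))%O -> g (lo f) < g y.
Proof. by rewrite lexi_pair !leEnat ltn_double => /andP[]. Qed.

Lemma key_edge_edge f (f2 : Edge eG) u v :
  (key (inr f, u) <= key (inr f2, v))%O -> g (lo f) <= g (lo f2).
Proof. by rewrite lexi_pair !leEnat ltnS leq_double => /andP[]. Qed.

Lemma key_vertex_vertex x u v :
  (key (inl x, u) <= key (inl x, v))%O -> h u <= h v.
Proof. by rewrite lexi_pair !leEnat leqnn. Qed.

Local Notation N w := (fwd (Qsum eG eH) key w).

Definition verts : {set QV eG * U} := [set w | is_vert w.1].

Definition edges_at x : {set QV eG * U} :=
  [set w : QV eG * U | if w.1 is inr f then x \in val f else false].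

Lemma edges_at_edge x f u : ((inr f, u) \in edges_at x) = (x \in val f).
Proof. by rewrite inE. Qed.

Definition across x w : T := if w.1 is inr f then other x f else x.

Lemma fwd_vertex_vertexP x u w :
  w \in N (inl x, u) :&: verts -> exists2 v, w = (inl x, v) & v \in fwd eH h u.
Proof.
case: w => -[y|f] v; rewrite !inE ?andbF //= Qsum_vertex_vertex andbT.
case/andP=> /andP[/eqP <- e_uv] le_key; exists v => //.
by rewrite in_fwd e_uv leEnat (key_vertex_vertex le_key).
Qed.

Lemma fwd_vertex_edgeP x u w :
  w \in N (inl x, u) :\: verts ->
  exists2 f, w = (inr f, u) & (x \in val f) && (g x <= g (lo f)).
Proof.
case: w => -[y|f] v; rewrite !inE //= Qsum_vertex_edge.
case/andP=> /andP[/eqP <- x_f] le_key; exists f => //.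
by rewrite x_f (key_vertex_edge le_key).
Qed.

Lemma fwd_edge_vertexP f u w :
  w \in N (inr f, u) :&: verts -> w = (inl (hi f), u) /\ g (lo f) < g (hi f).
Proof.
case: w => -[y|f'] v; rewrite !inE ?andbF //= Qsum_edge_vertex andbT.
case/andP=> /andP[/eqP <- y_f] /key_edge_vertex lt_lo_y.
have [_ def_f _] := edge_loP f; move: y_f; rewrite def_f !inE.
by case/orP=> /eqP eq_y; rewrite eq_y ?ltnn in lt_lo_y *.
Qed.

Lemma fwd_edge_edgeP f u w :
  w \in N (inr f, u) :\: verts ->
  exists2 f', w = (inr f', u) &
    [&& f != f', val f :&: val f' != set0 & g (lo f) <= g (lo f')].
Proof.
case: w => -[y|f'] v; rewrite !inE //= Qsum_edge_edge.
case/andP=> /and3P[/eqP <- ne_f meet_f] le_key; exists f' => //.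
by rewrite ne_f meet_f (key_edge_edge le_key).
Qed.

Lemma card_fwd_vertex_vertices x u : #|N (inl x, u) :&: verts| <= l.
Proof.
apply: leq_trans (fwd_h u); apply: (card_le_inj_in (f := snd)) => [w w' | w].
- by case/fwd_vertex_vertexP=> v -> _ /fwd_vertex_vertexP[v' -> _] /= ->.
- by case/fwd_vertex_vertexP=> v -> .
Qed.

Lemma card_fwd_vertex_edges x u : #|N (inl x, u) :\: verts| <= m.
Proof.
apply: leq_trans (fwd_g x); apply: (card_le_inj_in (f := across x)) => [w w' | w].
- case/fwd_vertex_edgeP=> f -> /andP[x_f _] /fwd_vertex_edgeP[f' -> /andP[x_f' _]].
  by move=> /= /(other_inj x_f x_f') ->.
- case/fwd_vertex_edgeP=> f -> /andP[x_f le_x]; have [e_x _] := otherP x_f.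
  by rewrite in_fwd e_x leEnat (leq_trans le_x (lo_le_other x f)).
Qed.

Lemma card_fwd_vertex x u : #|N (inl x, u)| <= m + l.
Proof.
rewrite -(cardsID verts) addnC.
by rewrite leq_add ?card_fwd_vertex_edges ?card_fwd_vertex_vertices.
Qed.

Lemma card_fwd_edge_vertices f u :
  #|N (inr f, u) :&: verts| <= (g (lo f) < g (hi f)).
Proof.
have [lt_lh | ge_lh] := ltnP (g (lo f)) (g (hi f)).
- apply: leq_trans (_ : _ <= #|[set (inl (hi f), u)]|) _; last by rewrite cards1.
  by apply/subset_leq_card/subsetP => w /fwd_edge_vertexP[-> _]; rewrite inE.
- rewrite leqn0 cards_eq0; apply: contraTT ge_lh.
  by case/set0Pn=> w /fwd_edge_vertexP[_]; rewrite -ltnNge.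
Qed.

Lemma card_fwd_edge_edges_lo f u : #|(N (inr f, u) :\: verts) :&: edges_at (lo f)| < m.
Proof.
have [e_lh def_f le_lh] := edge_loP f.
have hi_fwd : hi f \in fwd eG g (lo f) by rewrite in_fwd e_lh leEnat.
apply: leq_trans (fwd_g (lo f)); rewrite (cardsD1 (hi f)) hi_fwd add1n ltnS.
apply: (card_le_inj_in (f := across (lo f))) => [w w' | w].
- case/setIP=> /fwd_edge_edgeP[f1 -> _]; rewrite edges_at_edge => lo_f1.
  case/setIP=> /fwd_edge_edgeP[f2 -> _]; rewrite edges_at_edge => lo_f2.
  by move=> /= /(other_inj lo_f1 lo_f2) ->.
- case/setIP=> /fwd_edge_edgeP[f1 -> /and3P[ne_f _ le_lo]].
  rewrite edges_at_edge => lo_f1 /=.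
  have [e_lo def_f1] := otherP lo_f1.
  rewrite in_setD1 in_fwd e_lo leEnat (leq_trans le_lo (lo_le_other _ _)) !andbT /=.
  apply: contraNneq ne_f => eq_hi; apply/eqP/val_inj.
  by rewrite def_f def_f1 -eq_hi.
Qed.

Lemma card_fwd_edge_edges_hi f u : #|N (inr f, u) :\: verts :\: edges_at (lo f)| < d.
Proof.
have [e_lh def_f _] := edge_loP f.
have hi_meet w : w \in N (inr f, u) :\: verts :\: edges_at (lo f) ->
    exists2 f1, w = (inr f1, u) & (hi f \in val f1) && (lo f \notin val f1).
  rewrite in_setD => /andP[lo_w /fwd_edge_edgeP[f1 def_w /and3P[_ /set0Pn[z z_ff1] _]]].
  move: lo_w; rewrite def_w edges_at_edge => lo_f1; exists f1 => //.
  move: z_ff1; rewrite in_setI def_f !inE => /andP[/orP[] /eqP -> z_f1].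
  - by rewrite z_f1 in lo_f1.
  - by rewrite z_f1 lo_f1.
apply: leq_trans (deg_d (hi f)); rewrite (cardsD1 (lo f)) inE symG e_lh add1n ltnS.
apply: (card_le_inj_in (f := across (hi f))) => [w w' | w].
- case/hi_meet=> f1 -> /andP[hi_f1 _] /hi_meet[f2 -> /andP[hi_f2 _]].
  by move=> /= /(other_inj hi_f1 hi_f2) ->.
- case/hi_meet=> f1 -> /andP[hi_f1 lo_f1] /=; have [e_hi def_f1] := otherP hi_f1.
  rewrite in_setD1 inE e_hi andbT; apply: contraNneq lo_f1 => <-.
  by rewrite def_f1 !inE eqxx orbT.
Qed.

Lemma card_fwd_edge f u : #|N (inr f, u)| <= 2 * d - 2.
Proof.
rewrite -(cardsID verts) -(cardsID (edges_at (lo f)) (_ :\: verts)).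
move: (card_fwd_edge_vertices f u).
move: (card_fwd_edge_edges_lo f u) (card_fwd_edge_edges_hi f u).
set A := #|N (inr f, u) :&: verts|.
set B := #|(N (inr f, u) :\: verts) :&: edges_at (lo f)|.
set C := #|N (inr f, u) :\: verts :\: edges_at (lo f)|.
move: m_le_d; case: (ltnP (g (lo f)) (g (hi f))) => [/g_rise_m_lt_d | _] /=; lia.
Qed.

Lemma Qsum_degenerate_of_ranks :
  degenerate (Qsum eG eH) (maxn (2 * d - 2) (m + l)).
Proof.
apply: (degenerate_of_rank (r := key)) => -[[x | f] u].
- exact: leq_trans (card_fwd_vertex x u) (leq_maxr _ _).
- exact: leq_trans (card_fwd_edge f u) (leq_maxl _ _).
Qed.

End QsumRank.

Theorem theorem3 (T U : finType) (eG : rel T) (eH : rel U) (k l : nat) :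
  simple_graph eG -> simple_graph eH ->
  degenerate eG k -> 1 < max_deg eG -> degenerate eH l ->
  degenerate (Qsum eG eH) (maxn (2 * max_deg eG - 2) (k + l)).
Proof.
move=> [symG irrG] [_ irrH] dG _ dH.
have [h fwd_h] := rank_of_degenerate irrH dH.
have deg_G x : #|[set y | eG x y]| <= max_deg eG := leq_bigmax (F := deg eG) x.
have [lt_kD | ge_kD] := ltnP k (max_deg eG).
- have [g fwd_g] := rank_of_degenerate irrG dG.
  exact: (Qsum_degenerate_of_ranks symG fwd_g fwd_h deg_G (ltnW lt_kD)
            (fun _ _ _ => lt_kD)).
- have fwd_0 x : #|fwd eG (fun=> 0) x| <= max_deg eG.
    apply: leq_trans (deg_G x); apply/subset_leq_card/subsetP => y.
    by rewrite !inE andbT.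
  apply: degenerate_le (Qsum_degenerate_of_ranks symG fwd_0 fwd_h deg_G _ _) => //.
  by rewrite geq_max leq_maxl (leq_trans _ (leq_maxr _ _)) // leq_add2r.
Qed.
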